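(* Let $P$ be a finite poset with height function $h$, let $\overline{P}$ be its dual poset, and let $H$ be an integer at least the maximal value of $h$ (so that $H-h$ is a height function on $\overline{P}$). Then for all $n\in\mathbb{Z}$, $$\mathsf{Z}_{\overline{P},H-h}([n]_q)=q^{(n-1)H}\,\sigma\big(\mathsf{Z}_{P,h}([n]_q)\big),$$ where $\sigma$ is the automorphism of $\mathbb{Q}(q)$ replacing $q$ by $1/q$ (applied to the element $\mathsf{Z}_{P,h}([n]_q)\in\mathbb{Q}(q)$).
   Context: $q$ is an indeterminate; $[n]_q=(q^n-1)/(q-1)$ for $n\in\mathbb{Z}$. A height function on a finite poset $R$ is $h:R\to\mathbb{N}$ with $h(x)<h(y)$ whenever $y$ covers $x$. The $q$-Zeta polynomial $\mathsf{Z}_{R,h}\in\mathbb{Q}(q)[x]$ is the unique polynomial with $\mathsf{Z}_{R,h}([n]_q)=\sum_{e_1\le\cdots\le e_{n-1}\text{ in }R}q^{h(e_1)+\cdots+h(e_{n-1})}$ for all $n\ge2$ (it exists, with degree $\max h$; explicitly $\sum_{k\ge1}\sum_{c_1<\cdots<c_k}q^{\sum h(c_i)}\mathsf{E}_{(h(c_1),\dots,h(c_k))}((x-[k+1]_q)/q^{k+1})$ where $\mathsf{E}_a([m]_q)=\sum_{m'\in\mathbb{N}^k,\sum m'_i=m}q^{\sum a_im'_i}$ for $m\ge0$). *)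

From HB Require Import structures.
From mathcomp Require Import all_boot all_order all_algebra.
From mathcomp Require Import fraction.
From Stdlib Require Import ClassicalEpsilon.
Set Implicit Arguments. Unset Strict Implicit. Unset Printing Implicit Defensive.
Import Order.TTheory GRing.Theory Num.Theory.
Local Open Scope ring_scope.

Definition Qq := {fraction {poly rat}}.
Definition qv : Qq := tofrac ('X : {poly rat}).
Definition qint (n : int) : Qq := (qv ^ n - 1) / (qv - 1).

Definition ev_inv (p : {poly rat}) : Qq :=
  (map_poly (fun c : rat => tofrac (c%:P : {poly rat})) p).[qv^-1].
Definition sigma (f : Qq) : Qq :=
  let r := repr f in ev_inv (\n_r) / ev_inv (\d_r).

Definition covers (d : Order.disp_t) (T : finPOrderType d) (x y : T) : Prop :=
  (x < y)%O /\ ~ (exists z : T, (x < z)%O /\ (z < y)%O).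

Definition is_height (d : Order.disp_t) (T : finPOrderType d) (h : T -> nat) : Prop :=
  forall x y : T, covers x y -> (h x < h y)%N.

(* sum over multichains e_1 <= ... <= e_{n-1} of q^(h e_1 + ... + h e_{n-1}) *)
Definition chain_sum (d : Order.disp_t) (T : finPOrderType d) (h : T -> nat)
  (n : nat) : Qq :=
  \sum_(t : (n.-1).-tuple T | sorted (fun x y => (x <= y)%O) t)
     qv ^+ (sumn (map h t)).

(* the q-Zeta polynomial : the unique polynomial Z with Z([n]_q) = chain_sum n
   for all n >= 2 (chosen by description; such Z exists and is unique) *)
Definition qZeta_spec (d : Order.disp_t) (T : finPOrderType d) (h : T -> nat)
  (Z : {poly Qq}) : Prop :=
  forall n : nat, (2 <= n)%N -> Z.[qint n] = chain_sum h n.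

Definition qZeta (d : Order.disp_t) (T : finPOrderType d) (h : T -> nat) : {poly Qq} :=
  match excluded_middle_informative (exists Z, qZeta_spec h Z) with
  | left H => proj1_sig (constructive_indefinite_description _ H)
  | right _ => 0
  end.

(* Reversing the multichains of the dual poset and using the weight H - h gives
   q^((n-1)H) sigma(chain sum of P) at every n >= 2, since sigma(q^k) = q^-k.
   The multichain sums below a fixed x satisfy a first-order recurrence in the length
   whose inhomogeneous part only involves elements of smaller height, so Z_{P,h} has
   degree at most H. As sigma([n]_q) = q [n]_q / q^n and q^n = 1 + (q-1)[n]_q, the
   right-hand side is then, for every integer n, the value at [n]_q of a polynomial
   (a homogenization of sigma(Z_{P,h})), which agrees with Z_{dual P, H-h} at the
   infinitely many points [n]_q, n >= 2. *)

From HB Require Import structures.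
From mathcomp Require Import all_boot all_order all_algebra.
From mathcomp Require Import fraction generic_quotient ring.
From Stdlib Require Import ClassicalEpsilon.
Set Implicit Arguments. Unset Strict Implicit. Unset Printing Implicit Defensive.
Import Order.TTheory GRing.Theory Num.Theory.
Local Open Scope ring_scope.

Lemma tofrac_repr (R : idomainType) (f : {fraction R}) :
  f * tofrac \d_(repr f) = tofrac \n_(repr f).
Proof.
rewrite -{1}[f]reprK; set r := repr f.
unlock tofrac; rewrite !piE; apply/eqmodP => /=.
rewrite /FracField.equivf /= /FracField.mulf.
rewrite !numden_Ratio ?mulf_neq0 ?oner_neq0 ?denom_ratioP //.
by rewrite !mulr1 mulrC.
Qed.

Lemma frac_reprE (R : idomainType) (f : {fraction R}) :
  f = tofrac \n_(repr f) / tofrac \d_(repr f).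
Proof. by rewrite -tofrac_repr mulfK // tofrac_eq0 denom_ratioP. Qed.

Lemma qv_neq0 : qv != 0.
Proof. by rewrite tofrac_eq0 polyX_eq0. Qed.

Lemma qvX_inj : injective (GRing.exp qv).
Proof.
move=> a b /eqP; rewrite /qv -!rmorphXn tofrac_eq => /eqP E.
have := congr1 (fun p : {poly rat} => size p) E.
by rewrite !size_polyXn => -[].
Qed.

Lemma qv_sub1_neq0 : qv - 1 != 0.
Proof. by rewrite subr_eq0 -[qv]expr1 -(expr0 qv) (inj_eq qvX_inj). Qed.

Fact qvV_comm : commr_rmorph (@tofrac _ \o @polyC rat) qv^-1.
Proof. by move=> c; apply: mulrC. Qed.

Lemma ev_invE : ev_inv =1 horner_morph qvV_comm.
Proof. by []. Qed.

HB.instance Definition _ := GRing.RMorphism.copy ev_inv (horner_morph qvV_comm).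

Lemma ev_invX : ev_inv 'X = qv^-1.
Proof. by rewrite ev_invE horner_morphX. Qed.

(* [q^N p(1/q)] is the reversal of [p], whose constant term is [lead_coef p]. *)
Lemma ev_inv_neq0 (p : {poly rat}) : p != 0 -> ev_inv p != 0.
Proof.
move=> p0; set N := (size p).-1.
have sizep : size p = N.+1 by rewrite prednK // size_poly_gt0.
pose r : {poly rat} := \sum_(i < size p) p`_i *: 'X^(N - i).
have scale_ev : qv ^+ N * ev_inv p = tofrac r.
  rewrite ev_invE /horner_morph horner_coef size_map_poly mulr_sumr rmorph_sum /=.
  apply: eq_bigr => i _; rewrite coef_map /= -mul_polyC rmorphM rmorphXn /=.
  have iN : (i <= N)%N by rewrite -ltnS -sizep.
  rewrite mulrCA exprVn -{1}(subnK iN) exprD mulrK //.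
  by rewrite unitfE expf_neq0 // qv_neq0.
have r0 : r`_0 = lead_coef p.
  rewrite /r coef_sum sizep big_ord_recr /= subnn coefZ coefXn eqxx mulr1.
  rewrite big1 ?add0r // => i _.
  by rewrite coefZ coefXn eq_sym subn_eq0 leqNgt ltn_ord mulr0.
apply: contra_neq p0 => ev0; apply/eqP; rewrite -lead_coef_eq0 -r0.
have /eqP : tofrac r = 0 by rewrite -scale_ev ev0 mulr0.
by rewrite tofrac_eq0 => /eqP->; rewrite coef0.
Qed.

Lemma sigma_frac (n d : {poly rat}) : d != 0 ->
  sigma (tofrac n / tofrac d) = ev_inv n / ev_inv d.
Proof.
move=> d0; rewrite /sigma; set r := repr _.
have r0 : \d_r != 0 := denom_ratioP r.
have /eqP : tofrac (n * \d_r) = tofrac (\n_r * d).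
  by rewrite !tofracM -tofrac_repr /r mulrAC divfK // tofrac_eq0.
rewrite tofrac_eq => /eqP /(congr1 ev_inv); rewrite !rmorphM /= => E.
by apply/eqP; rewrite eqr_div ?ev_inv_neq0 // -E mulrC.
Qed.

Lemma sigma_tofrac (p : {poly rat}) : sigma (tofrac p) = ev_inv p.
Proof. by rewrite -[tofrac p]divr1 -tofrac1 sigma_frac ?oner_neq0 // rmorph1 divr1. Qed.

Lemma sigma_is_zmod_morphism : zmod_morphism sigma.
Proof.
move=> f g; rewrite [f]frac_reprE [g]frac_reprE.
set n1 := \n__; set d1 := \d__; set n2 := \n__; set d2 := \d__.
have [d10 d20] : d1 != 0 /\ d2 != 0 by split; apply: denom_ratioP.
have -> : tofrac n1 / tofrac d1 - tofrac n2 / tofrac d2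
          = tofrac (n1 * d2 - n2 * d1) / tofrac (d1 * d2).
  by rewrite -mulNr -tofracN addf_div ?tofrac_eq0 // -!tofracM -tofracD mulNr.
rewrite !sigma_frac ?mulf_neq0 // rmorphB !rmorphM.
by rewrite -[in RHS]mulNr [in RHS]addf_div ?ev_inv_neq0 // mulNr.
Qed.

Lemma sigma_is_monoid_morphism : monoid_morphism sigma.
Proof.
split; first by rewrite -tofrac1 sigma_tofrac rmorph1.
move=> f g; rewrite [f]frac_reprE [g]frac_reprE.
set n1 := \n__; set d1 := \d__; set n2 := \n__; set d2 := \d__.
have [d10 d20] : d1 != 0 /\ d2 != 0 by split; apply: denom_ratioP.
by rewrite mulf_div -!tofracM !sigma_frac ?mulf_neq0 // !rmorphM mulf_div.
Qed.

HB.instance Definition _ := GRing.isZmodMorphism.Build Qq Qq sigma sigma_is_zmod_morphism.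
HB.instance Definition _ := GRing.isMonoidMorphism.Build Qq Qq sigma sigma_is_monoid_morphism.

Lemma sigma_qv : sigma qv = qv^-1.
Proof. by rewrite sigma_tofrac ev_invX. Qed.

Lemma sigma_qvz (n : int) : sigma (qv ^ n) = qv ^ (- n).
Proof. by rewrite fmorphXz /= sigma_qv exprz_inv. Qed.

Lemma qvz_qint (n : int) : qv ^ n = 1 + (qv - 1) * qint n.
Proof. by rewrite /qint mulrC divfK ?qv_sub1_neq0 // addrC subrK. Qed.

Lemma qint_nat_inj : injective (fun n : nat => qint n).
Proof.
move=> a b /(congr1 (fun x => 1 + (qv - 1) * x)) /=.
by rewrite -!qvz_qint => /qvX_inj.
Qed.

Lemma sigma_qint (n : int) : sigma (qint n) = qv * qint n / qv ^ n.
Proof.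
rewrite /qint fmorph_div !rmorphB rmorph1 /= sigma_qvz sigma_qv -invr_expz.
have y0 : qv ^ n != 0 := expfz_neq0 n qv_neq0.
have qV1 : qv^-1 - 1 != 0 by rewrite subr_eq0 invr_eq1 -subr_eq0 qv_sub1_neq0.
apply/eqP; rewrite (eqr_div _ _ qV1 y0) mulrBl (mulVf y0) mul1r mulrAC.
rewrite mulrBr (mulfV qv_neq0) mulr1 -[1 - qv]opprB mulNr mulrC.
by rewrite (divfK qv_sub1_neq0) opprB.
Qed.

Lemma poly_eq_on_qint (Z1 Z2 : {poly Qq}) :
  (forall n : nat, (2 <= n)%N -> Z1.[qint n] = Z2.[qint n]) -> Z1 = Z2.
Proof.
move=> eqZ; apply/eqP; rewrite -subr_eq0; apply/eqP.
pose rs := [seq qint i.+2 | i <- iota 0 (size (Z1 - Z2))].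
apply: (@roots_geq_poly_eq0 _ _ rs); last by rewrite size_map size_iota.
  by apply/allP => _ /mapP [i _ ->]; rewrite rootE hornerD hornerN eqZ ?subrr.
by rewrite map_inj_uniq ?iota_uniq // => i j /qint_nat_inj [].
Qed.

Lemma qZeta_eq (d : Order.disp_t) (T : finPOrderType d) (h : T -> nat)
    (Z : {poly Qq}) :
  qZeta_spec h Z -> qZeta h = Z.
Proof.
move=> specZ; rewrite /qZeta; case: excluded_middle_informative => [exZ|]; last first.
  by case; exists Z.
case: constructive_indefinite_description => Z' specZ' /=.
by apply: poly_eq_on_qint => n n2; rewrite specZ ?specZ'.
Qed.

Section Homogenization.
Variable F : fieldType.

Definition homog (H : nat) (p A B : {poly F}) : {poly F} :=
  \sum_(k < H.+1) p`_k *: (A ^+ k * B ^+ (H - k)).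

Lemma horner_homog (H : nat) (p A B : {poly F}) (x : F) :
  (size p <= H.+1)%N -> B.[x] != 0 ->
  (homog H p A B).[x] = B.[x] ^+ H * p.[A.[x] / B.[x]].
Proof.
move=> sp b0; rewrite (horner_coef_wide _ sp) mulr_sumr horner_sum.
apply: eq_bigr => k _; rewrite hornerZ hornerM !horner_exp expr_div_n.
have kH : (k <= H)%N by rewrite -ltnS.
have -> : B.[x] ^+ H = B.[x] ^+ k * B.[x] ^+ (H - k) by rewrite -exprD subnKC.
field.
by rewrite expf_neq0.
Qed.

End Homogenization.

Definition qpow_poly : {poly Qq} := 1 + (qv - 1) *: 'X.

Lemma horner_qpow_poly (n : int) : qpow_poly.[qint n] = qv ^ n.
Proof. by rewrite hornerD hornerC hornerZ hornerX -qvz_qint. Qed.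

Lemma size_qpow_poly : (size qpow_poly <= 2)%N.
Proof.
rewrite (leq_trans (size_polyD _ _)) // geq_max size_poly1.
by rewrite (leq_trans (size_scale_leq _ _)) ?size_polyX.
Qed.

Definition qdual_poly (H : nat) (Z : {poly Qq}) : {poly Qq} :=
  (qv ^+ H)^-1 *: homog H (map_poly sigma Z) (qv *: 'X) qpow_poly.

Lemma horner_qdual_poly (H : nat) (Z : {poly Qq}) (n : int) :
  (size Z <= H.+1)%N ->
  (qdual_poly H Z).[qint n] = qv ^ ((n - 1) * H%:Z) * sigma Z.[qint n].
Proof.
move=> sZ; have y0 : qv ^ n != 0 := expfz_neq0 n qv_neq0.
rewrite hornerZ horner_homog ?size_map_poly ?horner_qpow_poly // hornerZ hornerX.
rewrite -sigma_qint horner_map mulrA; congr (_ * _).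
by rewrite mulrBl mul1r (expfzDr _ _ qv_neq0) -exprz_exp -invr_expz mulrC.
Qed.

Section WeightedChainSums.
Variables (R : pzSemiRingType) (a : R) (T : finType).
Implicit Types (r : rel T) (w : T -> nat).

Definition sorted_sum r w (m : nat) : R :=
  \sum_(t : m.-tuple T | sorted r t) a ^+ sumn (map w t).

Definition path_sum r w (x : T) (m : nat) : R :=
  \sum_(t : m.-tuple T | path r x t) a ^+ sumn (map w t).

Lemma big_tuple_cons (F : seq T -> R) (m : nat) :
  \sum_(t : m.+1.-tuple T) F t = \sum_(x : T) \sum_(t : m.-tuple T) F (x :: t).
Proof.
rewrite pair_big /= (reindex (fun p : T * m.-tuple T => cons_tuple p.1 p.2)) //=.
exists (fun t : m.+1.-tuple T => (thead t, behead_tuple t)).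
  by move=> [x t] _; congr pair; apply: val_inj.
by move=> t _; apply: val_inj; rewrite /= [in RHS](tuple_eta t).
Qed.

Lemma path_sumS r w (x : T) (m : nat) :
  path_sum r w x m.+1 = \sum_(y | r x y) a ^+ w y * path_sum r w y m.
Proof.
rewrite /path_sum big_mkcond [RHS]big_mkcond.
rewrite (big_tuple_cons (fun s => if path r x s then a ^+ sumn (map w s) else 0)).
apply: eq_bigr => y _ /=; case: (r x y) => /=; last by rewrite big1.
rewrite mulr_sumr [RHS]big_mkcond; apply: eq_bigr => t _ /=.
by case: (path r y t); rewrite ?mulr0 // exprD.
Qed.

Lemma sorted_sumS r w (m : nat) :
  sorted_sum r w m.+1 = \sum_y a ^+ w y * path_sum r w y m.
Proof.
rewrite /sorted_sum big_mkcond.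
rewrite (big_tuple_cons (fun s => if sorted r s then a ^+ sumn (map w s) else 0)).
apply: eq_bigr => y _ /=; rewrite mulr_sumr /path_sum [RHS]big_mkcond.
by apply: eq_bigr => t _ /=; case: (path r y t); rewrite ?mulr0 // exprD.
Qed.

Lemma sorted_sum_rev r w (m : nat) :
  sorted_sum r w m = sorted_sum (fun x y => r y x) w m.
Proof.
rewrite /sorted_sum (@reindex_inj _ _ _ _ (@rev_tuple m T)) /=; last first.
  by move=> t1 t2 /(congr1 val) /= /(congr1 rev); rewrite !revK => /val_inj.
by apply: eq_big => t; rewrite ?rev_sorted // map_rev sumn_rev.
Qed.

End WeightedChainSums.

Lemma height_lt (d : Order.disp_t) (P : finPOrderType d) (h : P -> nat) :
  is_height h -> forall x y : P, (x < y)%O -> (h x < h y)%N.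
Proof.
move=> hh x y; set between := fun u v : P => [pred z | (u < z < v)%O].
move: {2}_.+1 (ltnSn #|between x y|) => k.
elim: k x y => // k IHk x y ltk xy.
have [z /andP [xz zy] | none] := pickP (between x y); last first.
  by apply: hh; split=> // -[z [xz zy]]; have := none z; rewrite /= xz zy.
have sub_between u v : (x <= u)%O -> (v <= y)%O -> z \notin between u v ->
    (#|between u v| < k)%N.
  move=> xu vy zuv; rewrite ltnS in ltk; apply: leq_trans ltk.
  apply: proper_card; apply/properP.
  split; last by exists z; rewrite // inE xz zy.
  apply/subsetP => t /andP [ut tv]; apply/andP.
  by split; [apply: le_lt_trans ut | apply: lt_le_trans vy].
apply: (ltn_trans (IHk x z _ xz) (IHk z y _ zy)); apply: sub_between;
  by rewrite ?lexx ?ltW // inE ltxx ?andbF.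
Qed.

(* A particular solution is found coefficientwise; the general solution adds a multiple of [y ^+ k]. *)
Lemma recurrence_poly_solution (F : fieldType) (a : F) (k : nat) (R : {poly F})
    (s : nat -> F) :
  injective (GRing.exp a) -> (size R <= k)%N ->
  (forall m, s m.+1 = a ^+ k * s m + R.[a ^+ m]) ->
  exists G : {poly F}, (size G <= k.+1)%N /\ forall m, s m = G.[a ^+ m].
Proof.
move=> aX_inj sR recs.
pose G0 : {poly F} := \poly_(i < k) (R`_i / (a ^+ i - a ^+ k)).
have sG0 : (size G0 <= k)%N by apply: size_poly.
have G0_shift y : G0.[a * y] = a ^+ k * G0.[y] + R.[y].
  rewrite !(horner_coef_wide _ sG0) (horner_coef_wide _ sR) mulr_sumr -big_split.
  apply: eq_bigr => i _; rewrite coef_poly ltn_ord /= exprMn.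
  have : a ^+ i - a ^+ k != 0 by rewrite subr_eq0 (inj_eq aX_inj) neq_ltn ltn_ord.
  by move=> ne; field.
pose u m := s m - G0.[a ^+ m].
have uE m : u m = u 0%N * (a ^+ m) ^+ k.
  elim: m => [|m IHm]; first by rewrite expr1n mulr1.
  rewrite /u recs exprS G0_shift.
  have -> : a ^+ k * s m + R.[a ^+ m] - (a ^+ k * G0.[a ^+ m] + R.[a ^+ m])
          = a ^+ k * u m by rewrite /u; ring.
  by rewrite IHm exprMn mulrCA.
exists (G0 + u 0%N *: 'X^k); split.
  rewrite (leq_trans (size_polyD _ _)) // geq_max (leq_trans sG0) //.
  by rewrite (leq_trans (size_scale_leq _ _)) ?size_polyXn.
by move=> m; rewrite hornerD hornerZ hornerXn -uE /u addrC subrK.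
Qed.

Section QZetaExistence.
Variables (d : Order.disp_t) (P : finPOrderType d) (h : P -> nat).
Hypothesis h_height : is_height h.

Lemma path_sum_geS (x : P) (m : nat) :
  path_sum qv >=%O h x m.+1 =
  qv ^+ h x * path_sum qv >=%O h x m
  + \sum_(y | (y < x)%O) qv ^+ h y * path_sum qv >=%O h y m.
Proof.
rewrite path_sumS (bigD1 x) //=; congr (_ + _).
by apply: eq_bigl => y; rewrite lt_neqAle andbC.
Qed.

Lemma path_sum_ge_poly (x : P) : exists F : {poly Qq},
  (size F <= (h x).+1)%N /\ forall m, path_sum qv >=%O h x m = F.[qv ^+ m].
Proof.
suff hk k : forall x : P, (h x < k)%N -> exists F : {poly Qq},
    (size F <= (h x).+1)%N /\ forall m, path_sum qv >=%O h x m = F.[qv ^+ m].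
  exact: hk (ltnSn _).
elim: k => // k IHk {}x hxk.
have /fin_all_exists [Fs HFs] (y : P) : exists F : {poly Qq}, (y < x)%O ->
    (size F <= (h y).+1)%N /\ forall m, path_sum qv >=%O h y m = F.[qv ^+ m].
  have [yx | _] := boolP (y < x)%O; last by exists 0.
  have [F HF] := IHk y (leq_trans (height_lt h_height yx) hxk).
  by exists F.
pose R : {poly Qq} := \sum_(y | (y < x)%O) qv ^+ h y *: Fs y.
apply: (@recurrence_poly_solution _ _ _ R _ qvX_inj).
  apply/leq_sizeP => j hj; rewrite /R coef_sum big1 // => y yx.
  have [sF _] := HFs y yx.
  by rewrite coefZ (leq_sizeP _ _ sF) ?mulr0 // (leq_trans (height_lt h_height yx)).
move=> m; rewrite path_sum_geS /R horner_sum; congr (_ + _).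
by apply: eq_bigr => y yx; have [_ ->] := HFs y yx; rewrite hornerZ.
Qed.

Lemma qZeta_exists (H : nat) : (forall x : P, (h x <= H)%N) ->
  exists Z : {poly Qq}, qZeta_spec h Z /\ (size Z <= H.+1)%N.
Proof.
move=> hH; have /fin_all_exists [Fs HFs] := path_sum_ge_poly.
pose L := (qv ^+ 2)^-1 *: qpow_poly.
have L_qint m : L.[qint m.+2] = qv ^+ m.
  rewrite hornerZ horner_qpow_poly -[qv ^ _]/(qv ^+ (2 + m)) exprD.
  by rewrite mulKf ?expf_neq0 ?qv_neq0.
exists (\sum_x qv ^+ h x *: (Fs x \Po L)); split.
  move=> [|[|m]] // _; change (chain_sum h m.+2) with (sorted_sum qv <=%O h m.+1).
  rewrite sorted_sum_rev sorted_sumS horner_sum; apply: eq_bigr => y _.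
  by have [_ ->] := HFs y; rewrite hornerZ horner_comp L_qint.
apply/leq_sizeP => j hj; rewrite coef_sum big1 // => x _.
have [sF _] := HFs x.
have sL : ((size L).-1 <= 1)%N.
  by rewrite -subn1 leq_subLR (leq_trans (size_scale_leq _ _) size_qpow_poly).
have sF' : ((size (Fs x)).-1 <= H)%N.
  by rewrite -subn1 leq_subLR add1n (leq_trans sF) ?ltnS.
have sFL : (size (Fs x \Po L) <= H.+1)%N.
  by rewrite (leq_trans (size_comp_poly_leq _ _)) // ltnS -[H]muln1 leq_mul.
by rewrite coefZ (leq_sizeP _ _ sFL) ?mulr0.
Qed.

End QZetaExistence.

Lemma sumn_map_subnK (T : Type) (w : T -> nat) (H : nat) (t : seq T) :
  (forall x, (w x <= H)%N) ->
  (sumn [seq H - w x | x <- t] + sumn [seq w x | x <- t] = size t * H)%N.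
Proof.
by move=> wH; elim: t => //= x t IHt; rewrite addnACA IHt subnK ?wH // mulSn.
Qed.

Lemma chain_sum_dual (d : Order.disp_t) (P : finPOrderType d) (h : P -> nat)
    (H n : nat) :
  (forall x : P, (h x <= H)%N) -> (1 <= n)%N ->
  chain_sum (fun x : P^d => (H - h x)%N) n
  = qv ^ ((n%:Z - 1) * H%:Z) * sigma (chain_sum h n).
Proof.
move=> hH; case: n => // m _.
have -> : chain_sum (fun x : P^d => (H - h x)%N) m.+1
  = sorted_sum qv (fun x y : P => (y <= x)%O) (fun x => H - h x)%N m := erefl.
rewrite [LHS]sorted_sum_rev rmorph_sum mulr_sumr; apply: eq_bigr => t _.
rewrite rmorphXn /= sigma_qv exprVn.
have -> : ((m.+1)%:Z - 1) * H%:Z = (m * H)%N%:Z.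
  by rewrite -[m.+1]addn1 PoszD addrK -PoszM.
have sum_t := sumn_map_subnK t hH; rewrite size_tuple in sum_t.
by rewrite -[qv ^ _]/(qv ^+ (m * H)) -sum_t exprD mulfK ?expf_neq0 ?qv_neq0.
Qed.

Theorem mainTheorem15 (d : Order.disp_t) (P : finPOrderType d) (h : P -> nat)
  (H : nat) :
  is_height h ->
  (forall x : P, (h x <= H)%N) ->
  forall n : int,
    (qZeta (fun x : P^d => (H - h x)%N)).[qint n]
    = qv ^ ((n - 1) * H%:Z) * sigma ((qZeta h).[qint n]).
Proof.
move=> h_height hH n.
have [Z [specZ sizeZ]] := qZeta_exists h_height hH.
have spec_dual : qZeta_spec (fun x : P^d => (H - h x)%N) (qdual_poly H Z).
  move=> m m2; rewrite horner_qdual_poly ?sizeZ // specZ //.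
  by rewrite chain_sum_dual // ltnW.
by rewrite (qZeta_eq specZ) (qZeta_eq spec_dual) horner_qdual_poly.
Qed.
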